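(* Fix real numbers $r_1,r_2>0$ and integers $i_1,i_2>0$ with $\gcd(i_1,i_2)=1$. Then for all sufficiently large $D$ there exist integers $d_1,d_2>0$ with $\gcd(d_1,d_2)=1$ and $D=i_1d_1+i_2d_2$ such that \[ \Big|d_1-\frac{r_1D}{i_1r_1+i_2r_2}\Big|\le i_2J(D)\quad\text{and}\quad\Big|d_2-\frac{r_2D}{i_1r_1+i_2r_2}\Big|\le i_1J(D). \]
   Context: $J(D)$ is Jacobsthal's function: the minimal integer such that every interval of this length contains an integer coprime to $D$. *)

From Stdlib Require Import Reals ZArith.
Open Scope R_scope.

Definition covers (D : Z) (m : nat) : Prop :=
  forall a : Z, exists k : nat, (k < m)%nat /\ Z.gcd (a + Z.of_nat k) D = 1%Z.

Definition is_jacobsthal (D : Z) (J : nat) : Prop :=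
  covers D J /\ forall m : nat, covers D m -> (J <= m)%nat.

(* Legendre's sieve: the number of integers in a window of length L that are prime
   to k distinct primes q_i differs from L * prod (1 - 1/q_i) by at most 2^k - 1, so
   every window of length 4^k contains one.  Hence J(D) <= 4^omega(D), and since
   16^omega(D) <= 16^16 * rad(D), J(D)^2 <= 16^16 * D.  In particular
   i2 * J(D) <= r1 D / S for large D, where S = i1 r1 + i2 r2.  With u i1 + v i2 = 1,
   the decompositions D = i1 d1 + i2 d2 are d1 = u D + i2 t, d2 = v D - i1 t, and
   gcd (d1, d2) = gcd (t, D).  Placing d1 in (r1 D / S - i2 J(D), r1 D / S] amounts
   to choosing t among J(D) consecutive integers, one of which is prime to D; the
   bound for d2 then follows from i2 (d2 - r2 D / S) = i1 (r1 D / S - d1). *)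

From Stdlib Require Import Reals ZArith Lia Psatz List Bool Znumtheory.
Import ListNotations.
Open Scope Z_scope.

Definition ceil_div (z p : Z) : Z := - (- z / p).

Lemma ceil_div_spec z p : 0 < p -> p * ceil_div z p - p < z <= p * ceil_div z p.
Proof.
  intro Hp; unfold ceil_div.
  pose proof (Z.div_mod (- z) p ltac:(lia)); pose proof (Z.mod_pos_bound (- z) p Hp); nia.
Qed.

Lemma ceil_div_unique z p m : 0 < p -> p * m - p < z <= p * m -> ceil_div z p = m.
Proof. intros Hp Hm; pose proof (ceil_div_spec z p Hp); nia. Qed.

Lemma ceil_div_le_mono z w p : 0 < p -> z <= w -> ceil_div z p <= ceil_div w p.
Proof.
  intros Hp Hzw; pose proof (ceil_div_spec z p Hp); pose proof (ceil_div_spec w p Hp); nia.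
Qed.

Lemma ceil_div_exact z p : 0 < p -> z mod p = 0 -> z = p * ceil_div z p.
Proof.
  intros Hp Hz; apply Z.mod_divide in Hz as [k ->]; [|lia].
  rewrite (ceil_div_unique (k * p) p k); lia.
Qed.

Lemma ceil_div_succ z p : 0 < p ->
  ceil_div (z + 1) p = ceil_div z p + (if z mod p =? 0 then 1 else 0).
Proof.
  intro Hp; pose proof (ceil_div_spec z p Hp).
  destruct (Z.eqb_spec (z mod p) 0) as [E|E]; apply ceil_div_unique; try lia.
  - pose proof (ceil_div_exact z p Hp E); lia.
  - enough (z <> p * ceil_div z p) by lia.
    intro Hz; apply E; rewrite Hz, Z.mul_comm; apply Z.mod_mul; lia.
Qed.

Definition survives (l : list Z) (x : Z) : bool :=
  forallb (fun q => negb (x mod q =? 0)) l.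

Fixpoint count_survivors (l : list Z) (a : Z) (L : nat) : Z :=
  match L with
  | O => 0
  | S L' => count_survivors l a L' + (if survives l (a + Z.of_nat L') then 1 else 0)
  end.

Lemma count_survivors_nil a L : count_survivors [] a L = Z.of_nat L.
Proof. induction L as [|L IH]; simpl; [|rewrite IH]; lia. Qed.

Lemma count_survivors_pos l a L :
  0 < count_survivors l a L -> exists k, (k < L)%nat /\ survives l (a + Z.of_nat k) = true.
Proof.
  induction L as [|L IH]; simpl; intros H; [lia|].
  destruct (survives l (a + Z.of_nat L)) eqn:E.
  - exists L; auto.
  - destruct IH as (k & Hk & Hs); [lia|]; exists k; auto.
Qed.

Lemma prime_list_ge_2 l : Forall prime l -> Forall (fun q => 2 <= q) l.
Proof. apply Forall_impl, prime_ge_2. Qed.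

Lemma survives_iff l x : Forall (fun q => q <> 0) l ->
  survives l x = true <-> forall q, In q l -> ~ (q | x).
Proof.
  intros Hl; unfold survives; rewrite forallb_forall, Forall_forall in *.
  split; intros H q Hq; specialize (H q Hq);
    rewrite negb_true_iff, Z.eqb_neq, <- Z.mod_divide in * by auto; assumption.
Qed.

Lemma survives_mul_prime l p y : prime p -> ~ In p l -> Forall prime l ->
  survives l (p * y) = survives l y.
Proof.
  intros Hp Hpl Hl.
  assert (Hl0 : Forall (fun q => q <> 0) l)
    by (refine (Forall_impl _ _ (prime_list_ge_2 l Hl)); intros; lia).
  rewrite Forall_forall in Hl; apply eq_true_iff_eq; rewrite !survives_iff by assumption.
  split; intros H q Hq; specialize (H q Hq).
  - intros Hqy; apply H, Z.divide_mul_r, Hqy.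
  - intros Hqpy; destruct (prime_mult q (Hl q Hq) p y Hqpy) as [Hqp|]; [|auto].
    apply prime_div_prime in Hqp; [subst; contradiction|apply Hl|]; assumption.
Qed.

(* The survivors of [l] in [a, a + L) divisible by [p] are the [p * m] with [m] a
   survivor of [l] in [ceil (a / p), ceil ((a + L) / p)). *)
Lemma count_survivors_cons l p a L : prime p -> ~ In p l -> Forall prime l ->
  count_survivors l a L = count_survivors (p :: l) a L
    + count_survivors l (ceil_div a p) (Z.to_nat (ceil_div (a + Z.of_nat L) p - ceil_div a p)).
Proof.
  intros Hp Hpl Hl; pose proof (prime_ge_2 p Hp).
  induction L as [|L IH].
  - rewrite Z.add_0_r, Z.sub_diag; reflexivity.
  - set (x := a + Z.of_nat L) in IH.
    assert (Hx : a + Z.of_nat (S L) = x + 1) by lia.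
    pose proof (ceil_div_le_mono a x p ltac:(lia) ltac:(lia)).
    rewrite Hx, ceil_div_succ by lia; cbn [count_survivors survives forallb]; fold x.
    fold (survives l x); rewrite IH.
    destruct (Z.eqb_spec (x mod p) 0) as [E|E]; cbn [negb andb].
    + replace (Z.to_nat (ceil_div x p + 1 - ceil_div a p))
        with (S (Z.to_nat (ceil_div x p - ceil_div a p))) by lia.
      cbn [count_survivors].
      replace (ceil_div a p + Z.of_nat (Z.to_nat (ceil_div x p - ceil_div a p)))
        with (ceil_div x p) by lia.
      rewrite <- (survives_mul_prime l p (ceil_div x p)), <- ceil_div_exact
        by (assumption || lia).
      lia.
    + rewrite Z.add_0_r; lia.
Qed.

Definition list_prodZ (l : list Z) : Z := fold_right Z.mul 1 l.

Definition euler_prod (l : list Z) : Z := fold_right (fun q acc => (q - 1) * acc) 1 l.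

Lemma list_prodZ_pos l : Forall (fun q => 1 <= q) l -> 0 < list_prodZ l.
Proof. unfold list_prodZ; induction 1; cbn; nia. Qed.

Lemma euler_prod_bounds l : Forall (fun q => 2 <= q) l ->
  0 < euler_prod l /\ euler_prod l <= list_prodZ l <= 2 ^ Z.of_nat (length l) * euler_prod l.
Proof.
  unfold euler_prod, list_prodZ; induction 1; cbn [fold_right length]; [cbn; lia|].
  rewrite Nat2Z.inj_succ, Z.pow_succ_r by lia; nia.
Qed.

Lemma count_survivors_approx l a L : NoDup l -> Forall prime l ->
  Z.abs (count_survivors l a L * list_prodZ l - Z.of_nat L * euler_prod l)
    <= (2 ^ Z.of_nat (length l) - 1) * list_prodZ l.
Proof.
  intros Hnd Hl; revert a L.
  induction Hnd as [|p l Hpl Hnd IH]; intros a L.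
  - rewrite count_survivors_nil; cbn; lia.
  - apply Forall_cons_iff in Hl as [Hp Hl]; pose proof (prime_ge_2 p Hp).
    pose proof (euler_prod_bounds l (prime_list_ge_2 l Hl)).
    pose proof (count_survivors_cons l p a L Hp Hpl Hl) as Hsplit.
    set (M := Z.to_nat _) in Hsplit.
    assert (HM : Z.abs (p * Z.of_nat M - Z.of_nat L) <= p).
    { pose proof (ceil_div_spec a p ltac:(lia)).
      pose proof (ceil_div_spec (a + Z.of_nat L) p ltac:(lia)).
      pose proof (ceil_div_le_mono a (a + Z.of_nat L) p ltac:(lia) ltac:(lia)).
      unfold M; rewrite Z2Nat.id by lia; apply Z.abs_le; nia. }
    specialize (IH Hl a L) as HN; specialize (IH Hl (ceil_div a p) M) as HN'.
    cbn [list_prodZ euler_prod length fold_right] in *; fold (list_prodZ l) (euler_prod l) in *.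
    rewrite Nat2Z.inj_succ, Z.pow_succ_r by lia.
    set (N := count_survivors l a L) in *; set (N' := count_survivors l _ M) in *.
    replace (count_survivors (p :: l) a L) with (N - N') by lia.
    set (P := list_prodZ l) in *; set (F := euler_prod l) in *.
    set (e := 2 ^ Z.of_nat (length l)) in *.
    replace ((N - N') * (p * P) - Z.of_nat L * ((p - 1) * F))
      with (p * (N * P - Z.of_nat L * F) - p * (N' * P - Z.of_nat M * F)
            - (p * Z.of_nat M - Z.of_nat L) * F) by ring.
    rewrite Z.abs_le in HN, HN', HM |- *; nia.
Qed.

Lemma survivor_in_window l a : NoDup l -> Forall prime l ->
  exists k, (k < 4 ^ length l)%nat /\ survives l (a + Z.of_nat k) = true.
Proof.
  intros Hnd Hl; apply count_survivors_pos.
  pose proof (count_survivors_approx l a (4 ^ length l) Hnd Hl) as Happrox.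
  pose proof (euler_prod_bounds l (prime_list_ge_2 l Hl)) as (HF & HFP & HPF).
  rewrite Nat2Z.inj_pow in Happrox; change (Z.of_nat 4) with (2 * 2) in Happrox.
  rewrite Z.pow_mul_l, Z.abs_le in Happrox.
  set (e := 2 ^ Z.of_nat (length l)) in *; set (N := count_survivors _ _ _) in *.
  assert (He : 0 < e) by (apply Z.pow_pos_nonneg; lia).
  assert ((e - 1) * list_prodZ l <= (e - 1) * (e * euler_prod l)) by nia.
  assert (0 < N * list_prodZ l) by nia.
  nia.
Qed.

Definition prime_divisors (D : Z) : list Z :=
  filter (fun p => if prime_dec p then D mod p =? 0 else false)
    (map Z.of_nat (seq 0 (S (Z.to_nat D)))).

Lemma in_prime_divisors D p : 0 < D -> In p (prime_divisors D) <-> prime p /\ (p | D).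
Proof.
  intros HD; unfold prime_divisors; rewrite filter_In, in_map_iff.
  destruct (prime_dec p) as [Hp|Hp]; [|split; [intros [_ Hf]; discriminate Hf|tauto]].
  pose proof (prime_ge_2 p Hp).
  rewrite Z.eqb_eq, Z.mod_divide by lia; split.
  - tauto.
  - intros [_ HpD]; pose proof (Z.divide_pos_le p D HD HpD).
    split; [|assumption]; exists (Z.to_nat p); rewrite in_seq; lia.
Qed.

Lemma prime_divisors_NoDup D : NoDup (prime_divisors D).
Proof.
  apply NoDup_filter, (NoDup_map_inv Z.to_nat).
  rewrite map_map, (map_ext _ (fun n => n) Nat2Z.id), map_id; apply seq_NoDup.
Qed.

Lemma exists_prime_divisor n : 1 < n -> exists p, prime p /\ (p | n).
Proof.
  intros Hn; assert (Hn0 : 0 <= n) by lia; revert Hn.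
  pattern n; apply Z_lt_induction; [clear n Hn0; intros n IH Hn|exact Hn0].
  destruct (prime_dec n) as [Hp|Hp]; [exists n; split; [assumption|apply Z.divide_refl]|].
  destruct (not_prime_divide n Hn Hp) as (m & Hm & Hmn).
  destruct (IH m ltac:(lia) ltac:(lia)) as (p & Hp' & Hpm).
  exists p; split; [assumption|apply (Z.divide_trans _ m); assumption].
Qed.

Lemma survives_prime_divisors D x : 0 < D ->
  survives (prime_divisors D) x = true -> Z.gcd x D = 1.
Proof.
  intros HD Hx.
  assert (Hg : 0 < Z.gcd x D).
  { pose proof (Z.gcd_nonneg x D); enough (Z.gcd x D <> 0) by lia.
    rewrite Z.gcd_eq_0; lia. }
  destruct (Z.eq_dec (Z.gcd x D) 1) as [|Hg1]; [assumption|exfalso].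
  destruct (exists_prime_divisor (Z.gcd x D)) as (p & Hp & Hpg); [lia|].
  assert (HpD : (p | D)) by (apply (Z.divide_trans _ _ _ Hpg), Z.gcd_divide_r).
  assert (Hpx : (p | x)) by (apply (Z.divide_trans _ _ _ Hpg), Z.gcd_divide_l).
  rewrite survives_iff in Hx.
  - apply (Hx p); [apply in_prime_divisors|]; auto.
  - apply Forall_forall; intros q Hq; apply in_prime_divisors, proj1, prime_ge_2 in Hq; lia.
Qed.

Lemma prime_not_divide_list_prodZ p l : prime p -> Forall prime l -> ~ In p l ->
  ~ (p | list_prodZ l).
Proof.
  intros Hp; induction 1 as [|q l Hq Hl IH]; cbn [list_prodZ fold_right]; intros Hpl Hdiv.
  - apply (prime_ge_2 p) in Hp; apply Z.divide_1_r in Hdiv; lia.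
  - destruct (prime_mult p Hp q _ Hdiv) as [Hpq|Hpl'].
    + apply prime_div_prime in Hpq; [|assumption..]; apply Hpl; left; auto.
    + apply IH; [intros Hin; apply Hpl; right; assumption|exact Hpl'].
Qed.

Lemma list_prodZ_divide l D : NoDup l -> Forall prime l -> Forall (fun q => (q | D)) l ->
  (list_prodZ l | D).
Proof.
  induction 1 as [|p l Hpl Hnd IH]; intros Hl HlD; [apply Z.divide_1_l|].
  apply Forall_cons_iff in Hl as [Hp Hl]; apply Forall_cons_iff in HlD as [HpD HlD].
  destruct (IH Hl HlD) as [k ->].
  change (list_prodZ (p :: l)) with (p * list_prodZ l).
  destruct (prime_mult p Hp k _ HpD) as [[m ->]|Hpl'].
  - exists m; ring.
  - contradiction (prime_not_divide_list_prodZ p l Hp Hl Hpl).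
Qed.

Lemma pow_length_le_filter_lt l B : 1 <= B -> Forall (fun q => 1 <= q) l ->
  B ^ Z.of_nat (length l)
    <= B ^ Z.of_nat (length (filter (fun q => q <? B) l)) * list_prodZ l.
Proof.
  intros HB; induction 1 as [|q l Hq Hl IH]; [cbn; lia|].
  pose proof (list_prodZ_pos l Hl).
  change (list_prodZ (q :: l)) with (q * list_prodZ l); cbn [length filter].
  set (s := length (filter _ l)) in *.
  assert (0 <= B ^ Z.of_nat s) by (apply Z.pow_nonneg; lia).
  rewrite Nat2Z.inj_succ, Z.pow_succ_r by lia.
  destruct (Z.ltb_spec q B); cbn [length]; fold s; [rewrite Nat2Z.inj_succ, Z.pow_succ_r by lia|];
    generalize dependent (B ^ Z.of_nat s); generalize (B ^ Z.of_nat (length l));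
    intros X Y HXY HY; assert (0 <= Y * list_prodZ l) by nia;
    assert (B * X <= B * (Y * list_prodZ l)) by nia; nia.
Qed.

Lemma pow_length_le_list_prodZ l B : 1 <= B -> NoDup l -> Forall (fun q => 1 <= q) l ->
  B ^ Z.of_nat (length l) <= B ^ B * list_prodZ l.
Proof.
  intros HB Hnd Hl.
  assert (Hsmall : (length (filter (fun q => (q <? B)%Z) l)
                    <= length (map Z.of_nat (seq 0 (Z.to_nat B))))%nat).
  { apply NoDup_incl_length; [apply NoDup_filter, Hnd|].
    intros q Hq; apply filter_In in Hq as [Hq HqB]; apply Z.ltb_lt in HqB.
    rewrite Forall_forall in Hl; specialize (Hl q Hq).
    apply in_map_iff; exists (Z.to_nat q); rewrite in_seq; lia. }
  rewrite length_map, length_seq in Hsmall.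
  eapply Z.le_trans; [apply pow_length_le_filter_lt; assumption|].
  apply Z.mul_le_mono_nonneg_r; [apply Z.lt_le_incl, list_prodZ_pos, Hl|].
  apply Z.pow_le_mono_r; lia.
Qed.

Lemma covers_prime_divisors D : 0 < D -> covers D (4 ^ length (prime_divisors D)).
Proof.
  intros HD a.
  assert (Hl : Forall prime (prime_divisors D)).
  { apply Forall_forall; intros q Hq; apply in_prime_divisors in Hq; tauto. }
  destruct (survivor_in_window _ a (prime_divisors_NoDup D) Hl) as (k & Hk & Hsurv).
  exists k; split; [assumption|apply survives_prime_divisors; assumption].
Qed.

Lemma jacobsthal_sq_le D J : 0 < D -> is_jacobsthal D J ->
  Z.of_nat J * Z.of_nat J <= 16 ^ 16 * D.
Proof.
  intros HD [_ Hmin].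
  set (l := prime_divisors D).
  assert (Hl : Forall (fun q => prime q /\ (q | D)) l).
  { apply Forall_forall; intros q; apply in_prime_divisors, HD. }
  assert (HJ : Z.of_nat J <= 4 ^ Z.of_nat (length l)).
  { rewrite <- (Nat2Z.inj_pow 4); apply Nat2Z.inj_le, Hmin, covers_prime_divisors, HD. }
  assert (HPD : list_prodZ l <= D).
  { apply Z.divide_pos_le; [assumption|].
    apply list_prodZ_divide; [apply prime_divisors_NoDup|..];
      refine (Forall_impl _ _ Hl); tauto. }
  assert (H16 : 16 ^ Z.of_nat (length l) <= 16 ^ 16 * list_prodZ l).
  { apply pow_length_le_list_prodZ; [lia|apply prime_divisors_NoDup|].
    refine (Forall_impl _ _ Hl); intros q [Hq _]; apply prime_ge_2 in Hq; lia. }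
  change 16 with (4 * 4) in H16 at 1; rewrite Z.pow_mul_l in H16.
  nia.
Qed.

Close Scope Z_scope.
Open Scope R_scope.

Lemma covers_real_window D J (y : R) : covers D J ->
  exists t : Z, y < IZR t <= y + INR J /\ Z.gcd t D = 1%Z.
Proof.
  intros Hcov; destruct (Hcov (up y)) as (k & Hk & Hgcd).
  exists (up y + Z.of_nat k)%Z; split; [|assumption].
  destruct (archimed y) as [Hup1 Hup2].
  apply le_INR in Hk; rewrite S_INR in Hk.
  rewrite plus_IZR, <- INR_IZR_INZ; pose proof (pos_INR k); lra.
Qed.

Lemma gcd_bezout_shift i1 i2 u v D t : (u * i1 + v * i2 = 1)%Z -> Z.gcd t D = 1%Z ->
  Z.gcd (u * D + i2 * t) (v * D - i1 * t) = 1%Z.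
Proof.
  intros Huv Htd; set (d1 := (u * D + i2 * t)%Z); set (d2 := (v * D - i1 * t)%Z).
  assert (Ht : t = (v * d1 - u * d2)%Z).
  { unfold d1, d2; rewrite <- (Z.mul_1_r t) at 1; rewrite <- Huv; ring. }
  assert (HD : D = (i1 * d1 + i2 * d2)%Z).
  { unfold d1, d2; rewrite <- (Z.mul_1_r D) at 1; rewrite <- Huv; ring. }
  apply Z.divide_1_r_nonneg; [apply Z.gcd_nonneg|]; rewrite <- Htd.
  pose proof (Z.gcd_divide_l d1 d2); pose proof (Z.gcd_divide_r d1 d2).
  apply Z.gcd_greatest; [rewrite Ht; apply Z.divide_sub_r|rewrite HD; apply Z.divide_add_r];
    apply Z.divide_mul_r; assumption.
Qed.

Lemma linear_le_of_sq_le_eventually (K C : R) : 0 < K ->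
  exists D0 : Z, forall (D : Z) (j : R), (D0 <= D)%Z -> 0 <= j -> j * j <= C * IZR D ->
    K * j <= IZR D.
Proof.
  intros HK; exists (Z.max 1 (up (C * K * K))); intros D j HD Hj Hjj.
  assert (HD1 : 1 <= IZR D) by (apply IZR_le; lia).
  assert (HDbig : C * K * K < IZR D).
  { destruct (archimed (C * K * K)) as [Hup _].
    apply Rlt_le_trans with (1 := Hup), IZR_le; lia. }
  assert (Hsq : (K * j) * (K * j) < IZR D * IZR D).
  { apply Rle_lt_trans with ((C * K * K) * IZR D); [nra|].
    apply Rmult_lt_compat_r; lra. }
  nra.
Qed.

Lemma jacobsthal_le_eventually (K : R) : 0 < K ->
  exists D0 : Z, forall (D : Z) (J : nat), (D0 <= D)%Z -> is_jacobsthal D J ->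
    K * INR J <= IZR D.
Proof.
  intros HK; destruct (linear_le_of_sq_le_eventually K (IZR (16 ^ 16)) HK) as [D0 HD0].
  exists (Z.max 1 D0); intros D J HD HJ; apply (HD0 D); [lia|apply pos_INR|].
  rewrite INR_IZR_INZ, <- !mult_IZR; apply IZR_le, jacobsthal_sq_le; [lia|assumption].
Qed.

Lemma balanced_rounding (i1 i2 j x1 x2 D d1 d2 : R) : 0 < i1 -> 0 < i2 ->
  i1 * x1 + i2 * x2 = D -> i1 * d1 + i2 * d2 = D -> x1 - i2 * j < d1 <= x1 ->
  x2 <= d2 /\ Rabs (d1 - x1) <= i2 * j /\ Rabs (d2 - x2) <= i1 * j.
Proof.
  intros Hi1 Hi2 Hx Hd Hd1.
  assert (Hd2 : i2 * (d2 - x2) = i1 * (x1 - d1)) by lra.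
  assert (0 <= d2 - x2 <= i1 * j) by (split; nra).
  split; [lra|]; split; apply Rabs_le; lra.
Qed.

Lemma coprime_decomposition_near (i1 i2 D : Z) (J : nat) (x1 x2 : R) :
  (0 < i1)%Z -> (0 < i2)%Z -> Z.gcd i1 i2 = 1%Z -> covers D J ->
  IZR i1 * x1 + IZR i2 * x2 = IZR D -> IZR i2 * INR J <= x1 -> 0 < x2 ->
  exists d1 d2 : Z,
    (0 < d1)%Z /\ (0 < d2)%Z /\ Z.gcd d1 d2 = 1%Z /\ D = (i1 * d1 + i2 * d2)%Z /\
    Rabs (IZR d1 - x1) <= IZR i2 * INR J /\ Rabs (IZR d2 - x2) <= IZR i1 * INR J.
Proof.
  intros Hi1 Hi2 Hg Hcov Hx Hi2J Hx2; apply IZR_lt in Hi1, Hi2.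
  destruct (Zis_gcd_bezout i1 i2 1) as [u v Huv]; [rewrite <- Hg; apply Zgcd_is_gcd|].
  set (y := (x1 - IZR (u * D)) / IZR i2 - INR J).
  destruct (covers_real_window D J y Hcov) as (t & Ht & Hgt).
  set (d1 := (u * D + i2 * t)%Z); set (d2 := (v * D - i1 * t)%Z).
  assert (HDsplit : D = (i1 * d1 + i2 * d2)%Z).
  { unfold d1, d2; rewrite <- (Z.mul_1_r D) at 1; rewrite <- Huv; ring. }
  assert (Hd : IZR i1 * IZR d1 + IZR i2 * IZR d2 = IZR D)
    by (rewrite <- !mult_IZR, <- plus_IZR, <- HDsplit; reflexivity).
  assert (Hd1 : x1 - IZR i2 * INR J < IZR d1 <= x1).
  { unfold d1; rewrite plus_IZR, (mult_IZR i2 t).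
    assert (IZR i2 * y = x1 - IZR (u * D) - IZR i2 * INR J) by (unfold y; field; lra).
    assert (IZR i2 * y < IZR i2 * IZR t) by (apply Rmult_lt_compat_l; lra).
    assert (IZR i2 * IZR t <= IZR i2 * (y + INR J)) by (apply Rmult_le_compat_l; lra).
    lra. }
  destruct (balanced_rounding _ _ (INR J) _ _ _ _ _ Hi1 Hi2 Hx Hd Hd1) as (Hd2 & Herr1 & Herr2).
  exists d1, d2; repeat split; try assumption; [apply lt_IZR; lra..|].
  apply gcd_bezout_shift; assumption.
Qed.

Theorem lemma3p3 (r1 r2 : R) (i1 i2 : Z) :
  0 < r1 -> 0 < r2 -> (0 < i1)%Z -> (0 < i2)%Z -> Z.gcd i1 i2 = 1%Z ->
  exists D0 : Z, forall (D : Z) (J : nat), (D0 <= D)%Z -> is_jacobsthal D J ->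
    exists d1 d2 : Z,
      (0 < d1)%Z /\ (0 < d2)%Z /\ Z.gcd d1 d2 = 1%Z /\
      D = (i1 * d1 + i2 * d2)%Z /\
      Rabs (IZR d1 - r1 * IZR D / (IZR i1 * r1 + IZR i2 * r2)) <= IZR i2 * INR J /\
      Rabs (IZR d2 - r2 * IZR D / (IZR i1 * r1 + IZR i2 * r2)) <= IZR i1 * INR J.
Proof.
  intros Hr1 Hr2 Hi1 Hi2 Hg.
  assert (HS : 0 < IZR i1 * r1 + IZR i2 * r2) by (apply IZR_lt in Hi1, Hi2; nra).
  set (S := IZR i1 * r1 + IZR i2 * r2) in *.
  destruct (jacobsthal_le_eventually (S * IZR i2 / r1)) as [D0 HD0];
    [apply Rdiv_lt_0_compat; [apply Rmult_lt_0_compat, IZR_lt|]; assumption|].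
  exists (Z.max 1 D0); intros D J HD HJ.
  assert (HDpos : 0 < IZR D) by (apply IZR_lt; lia).
  specialize (HD0 D J ltac:(lia) HJ).
  apply coprime_decomposition_near; [assumption.. | apply HJ | unfold S in *; field; lra | |].
  - replace (IZR i2 * INR J) with (r1 / S * (S * IZR i2 / r1 * INR J)) by (field; lra).
    replace (r1 * IZR D / S) with (r1 / S * IZR D) by (field; lra).
    apply Rmult_le_compat_l; [apply Rlt_le, Rdiv_lt_0_compat|]; assumption.
  - apply Rdiv_lt_0_compat; [apply Rmult_lt_0_compat|]; assumption.
Qed.
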